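(* Consider $n$ birds in $\mathbb{R}^d$ evolving noise-free by $x(t)=x(t-1)+v(t)$, $v(t+1)=(P\otimes I_d)v(t)$, with fixed connected flocking network $G$ and fixed $P=I_n-CL$, where the coordinates of $x(0)$ and $v(1)$ are rationals over $\mathfrak{p}$ bits. Let $\pi=(\mathrm{tr}\,C^{-1})^{-1}C^{-1}\mathbf{1}$, $\Gamma=\lim_{t\to\infty}\bigl(-\mathbf{1}\pi^Tt+\sum_{s=0}^{t-1}P^s\bigr)$ and $x^r=((I_n-\mathbf{1}\pi^T)\otimes I_d)x(0)+(\Gamma\otimes I_d)v(1)$. Then the elements of $\Gamma$ are CD-rationals over $O(n\log n)$ bits and the coordinates of $x^r$ are CD-rationals over $O(n\log n+\mathfrak{p}n)$ bits.
   Context: $G$ is a connected undirected graph without self-loops on $n$ vertices with degrees $d_i$ and Laplacian $L$; $C=\mathrm{diag}(c_1,\dots,c_n)$ with positive rationals $c_i$ of $O(\log n)$ bits and $c_id_i<1$. A set of numbers is CD-rational over $k$ bits if they can be written as $p_i/q$ with a common denominator $q$, all integers involved having $O(k)$ bits. *)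

From HB Require Import structures.
From mathcomp Require Import all_boot all_order all_algebra.
From mathcomp Require Import all_classical all_reals topology normedtype sequences.
Set Implicit Arguments. Unset Strict Implicit. Unset Printing Implicit Defensive.
Import Order.TTheory GRing.Theory Num.Theory.
Local Open Scope ring_scope.

Definition fits (b : nat) (z : int) : bool := (absz z < 2 ^ b)%N.

Definition rat_bits (b : nat) (r : rat) : bool := fits b (numq r) && fits b (denq r).

(* A family y of reals is CD-rational over b bits: y_i = p_i / q with a common
   denominator q, all integers involved having at most b bits. *)
Definition CD_rational {R : numFieldType} {I : finType} (b : nat) (y : I -> R) : Prop :=
  exists q : int, q != 0 /\ fits b q /\
    forall i, exists p : int, fits b p /\ y i = p%:~R / q%:~R.

Definition deg {n : nat} (e : rel 'I_n) (i : 'I_n) : nat := #|[set j | e i j]|.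

Definition laplacian (R : ringType) {n : nat} (e : rel 'I_n) : 'M[R]_n :=
  \matrix_(i, j) (if i == j then (deg e i)%:R else if e i j then -1 else 0).

Definition Cmat (R : realType) {n : nat} (c : 'I_n -> rat) : 'M[R]_n :=
  diag_mx (\row_i ratr (c i)).

Definition Pmat (R : realType) {n : nat} (e : rel 'I_n) (c : 'I_n -> rat) : 'M[R]_n :=
  1%:M - Cmat R c *m laplacian R e.

Definition mxpow {R : ringType} {n : nat} (A : 'M[R]_n) (k : nat) : 'M[R]_n :=
  iter k (mulmx A) 1%:M.

Definition pivec (R : realType) {n : nat} (c : 'I_n -> rat) : 'cV[R]_n :=
  (\tr (invmx (Cmat R c)))^-1 *: (invmx (Cmat R c) *m const_mx 1).

Definition onepiT (R : realType) {n : nat} (c : 'I_n -> rat) : 'M[R]_n :=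
  const_mx 1 *m (pivec R c)^T.

Definition Gamma_partial (R : realType) {n : nat} (e : rel 'I_n) (c : 'I_n -> rat)
  (t : nat) : 'M[R]_n :=
  - (t%:R *: onepiT R c) + \sum_(s < t) mxpow (Pmat R e c) s.

(* x^r = ((I - 1 pi^T) (x) I_d) x(0) + (Gamma (x) I_d) v(1), with positions stored
   as n x d matrices (row i = bird i), so (A (x) I_d) acts as left multiplication by A. *)
Definition xr (R : realType) {n d : nat} (c : 'I_n -> rat) (Gamma : 'M[R]_n)
  (X0 V1 : 'M[rat]_(n, d)) : 'M[R]_(n, d) :=
  (1%:M - onepiT R c) *m map_mx ratr X0 + Gamma *m map_mx ratr V1.

From HB Require Import structures.
From mathcomp Require Import all_boot all_order all_algebra.
From mathcomp Require Import all_classical all_reals topology normedtype sequences.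
From mathcomp Require Import perm ring lra zify.
Import Order.TTheory GRing.Theory Num.Theory.
Import numFieldNormedType.Exports.
Local Open Scope ring_scope.
Local Open Scope classical_set_scope.
Set Implicit Arguments. Unset Strict Implicit. Unset Printing Implicit Defensive.

(* P = I - C L is stochastic with positive diagonal and a connected support, so a power of
   P has a column bounded below and Doeblin's contraction gives P^t y --> (pi^T y) 1, where
   pi is proportional to C^-1 1 and satisfies pi^T P = pi^T.  Writing c_i = u_i / v_i, the
   integer bordered matrix [[U L U, v]; [v^T, 0]] (U = diag u) is nonsingular: the
   convergence shows that the kernel of L is spanned by 1, and the border excludes that
   direction.  Its adjugate yields
   Gamma = U A11 V / det and pi^T = A21 V / det with C L Gamma = I - 1 pi^T and
   pi^T Gamma = 0, hence Gamma_partial t = Gamma - P^t Gamma --> Gamma.  Leibniz's formula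
   bounds det and the cofactors by 2^O(n log n), and x^r has the common denominator
   det * (product of the denominators of x(0) and v(1)). *)

Lemma mxpowS (R : nzRingType) n (A : 'M[R]_n) k : mxpow A k.+1 = A *m mxpow A k.
Proof. by []. Qed.

Lemma mxpowD (R : nzRingType) n (A : 'M[R]_n) k l :
  mxpow A (k + l) = mxpow A k *m mxpow A l.
Proof. by elim: k => [|k IH]; rewrite ?mul1mx // addSn mxpowS IH mulmxA. Qed.

Lemma mxpowSr (R : nzRingType) n (A : 'M[R]_n) k : mxpow A k.+1 = mxpow A k *m A.
Proof. by rewrite -addn1 mxpowD /= mulmx1. Qed.

Section Stochastic.
Variable R : numDomainType.

Definition stochastic m n (Q : 'M[R]_(m, n)) :=
  (forall i j, 0 <= Q i j) /\ (forall i, \sum_j Q i j = 1).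

Lemma stochastic1 n : stochastic (1%:M : 'M[R]_n).
Proof.
split=> [i j|i]; first by rewrite mxE ler0n.
by rewrite (bigD1 i) //= big1 ?addr0 => [|j /negbTE]; rewrite mxE ?eqxx // eq_sym => ->.
Qed.

Lemma stochasticM m n p (A : 'M[R]_(m, n)) (B : 'M[R]_(n, p)) :
  stochastic A -> stochastic B -> stochastic (A *m B).
Proof.
move=> [A0 A1] [B0 B1]; split=> [i j|i].
  by rewrite mxE; apply: sumr_ge0 => l _; apply: mulr_ge0.
under eq_bigr => j _ do rewrite mxE.
by rewrite exchange_big /=; under eq_bigr => l _ do rewrite -mulr_sumr B1 mulr1.
Qed.

Lemma stochastic_mxpow n (Q : 'M[R]_n) k : stochastic Q -> stochastic (mxpow Q k).
Proof. by move=> sQ; elim: k => [|k IH]; [apply: stochastic1 | apply: stochasticM]. Qed.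

Lemma stochastic_le1 m n (Q : 'M[R]_(m, n)) i j : stochastic Q -> Q i j <= 1.
Proof.
move=> [Q0 Q1]; rewrite -(Q1 i) (bigD1 j) //= lerDl.
by apply: sumr_ge0 => k _; apply: Q0.
Qed.

Lemma stochastic_mul_const m n p (Q : 'M[R]_(m, n)) (a : R) :
  stochastic Q -> Q *m (const_mx a : 'M_(n, p)) = const_mx a.
Proof.
move=> [_ Q1]; apply/matrixP => i k; rewrite !mxE.
by under eq_bigr => j _ do rewrite mxE; rewrite -mulr_suml Q1 mul1r.
Qed.

End Stochastic.

Section Doeblin.
Variable R : realFieldType.

(* Doeblin's bound: mass at least d on column j0 pulls every average towards y j0. *)
Lemma stochastic_mulmx_ge m n (Q : 'M[R]_(m, n)) (y : 'cV[R]_n) j0 (d lb : R) :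
  stochastic Q -> 0 <= d -> (forall i, d <= Q i j0) -> (forall j, lb <= y j 0) ->
  forall i, lb + d * (y j0 0 - lb) <= (Q *m y) i 0.
Proof.
move=> [Q0 Q1] d0 hd hy i.
have -> : (Q *m y) i 0 = lb + \sum_j Q i j * (y j 0 - lb).
  rewrite mxE; under [X in _ = _ + X]eq_bigr => j _ do rewrite mulrBr.
  by rewrite sumrB -mulr_suml Q1 mul1r addrC subrK.
have hyj j : 0 <= y j 0 - lb by rewrite subr_ge0.
rewrite lerD2l (bigD1 j0) //= -[X in X <= _]addr0 lerD ?ler_wpM2r //.
by apply: sumr_ge0 => j _; apply: mulr_ge0.
Qed.

Lemma stochastic_mulmx_bounds m n (Q : 'M[R]_(m, n)) (y : 'cV[R]_n) j0 (d lb ub : R) :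
  stochastic Q -> 0 <= d -> (forall i, d <= Q i j0) -> (forall j, lb <= y j 0 <= ub) ->
  forall i, lb + d * (y j0 0 - lb) <= (Q *m y) i 0 <= ub - d * (ub - y j0 0).
Proof.
move=> sQ d0 hd hy i; apply/andP; split.
  by apply: stochastic_mulmx_ge => // j; case/andP: (hy j).
have := @stochastic_mulmx_ge _ _ Q (- y) j0 d (- ub) sQ d0 hd.
rewrite mulmxN => /(_ _ i); rewrite !mxE.
have -> : - ub + d * (- y j0 0 - - ub) = - (ub - d * (ub - y j0 0)) by ring.
by rewrite lerN2; apply; move=> j; rewrite mxE lerN2; case/andP: (hy j).
Qed.

Lemma mxpow_oscillation n (Q : 'M[R]_n) N j0 (d lb ub : R) (y : 'cV[R]_n) :
  stochastic Q -> 0 <= d -> (forall i, d <= mxpow Q N i j0) ->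
  (forall j, lb <= y j 0 <= ub) ->
  forall k t, (N * k <= t)%N -> exists lb' ub',
    (forall i, lb' <= (mxpow Q t *m y) i 0 <= ub') /\ ub' - lb' <= (1 - d) ^+ k * (ub - lb).
Proof.
move=> sQ d0 hd hy; elim=> [|k IH] t ht.
  exists lb, ub; split; last by rewrite expr0 mul1r.
  have sQt := stochastic_mxpow t sQ.
  move=> i; have := @stochastic_mulmx_bounds _ _ _ y j0 0 lb ub sQt (lexx 0).
  by rewrite !mul0r addr0 subr0; apply=> // i'; case: sQt.
have [lb' [ub' [hb hw]]] := IH (t - N)%N ltac:(lia).
have d1 : d <= 1 := le_trans (hd j0) (stochastic_le1 _ _ (stochastic_mxpow N sQ)).
set z := mxpow Q (t - N) *m y in hb.
exists (lb' + d * (z j0 0 - lb')), (ub' - d * (ub' - z j0 0)); split.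
  have -> : t = (N + (t - N))%N by lia.
  move=> i; rewrite mxpowD -mulmxA.
  by apply: stochastic_mulmx_bounds => //; apply: stochastic_mxpow.
have -> : ub' - d * (ub' - z j0 0) - (lb' + d * (z j0 0 - lb')) = (1 - d) * (ub' - lb').
  by ring.
by rewrite exprS -mulrA ler_wpM2l // subr_ge0.
Qed.

End Doeblin.

Lemma stochastic_mxpow_cvg (R : realType) n (Q : 'M[R]_n) (pi : 'rV[R]_n) N j0 (d : R) :
  stochastic Q -> stochastic pi -> pi *m Q = pi -> 0 < d -> (forall i, d <= mxpow Q N i j0) ->
  forall (y : 'cV[R]_n) i, (fun t => (mxpow Q t *m y) i 0) @ \oo --> (pi *m y) 0 0.
Proof.
move=> sQ spi piQ d0 hd y i.
have d1 : d <= 1 := le_trans (hd j0) (stochastic_le1 _ _ (stochastic_mxpow N sQ)).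
have pi_mxpow t : pi *m mxpow Q t = pi.
  by elim: t => [|t IH]; rewrite ?mulmx1 // mxpowSr mulmxA IH.
set S := \sum_j `|y j 0|.
have hy j : - S <= y j 0 <= S.
  by rewrite -ler_norml /S (bigD1 j) //= lerDl sumr_ge0.
have S0 : 0 <= S by apply: sumr_ge0.
apply/cvgrPdist_le => eps eps0.
have hz : `|1 - d| < 1 by rewrite ger0_norm; lra.
have /cvgrPdist_le/(_ (eps / (2 * S + 1))) := cvg_expr hz.
rewrite divr_gt0 ?ltr_wpDl ?mulr_ge0 // => /(_ isT) [k _ /(_ k (leqnn k))] /=.
rewrite sub0r normrN ger0_norm ?exprn_ge0 ?subr_ge0 // ler_pdivlMr ?ltr_wpDl ?mulr_ge0 // => hk.
exists (N * k)%N => // t /= ht.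
have [lb [ub [hb hw]]] := mxpow_oscillation sQ (ltW d0) hd hy ht.
have := @stochastic_mulmx_bounds _ _ _ pi (mxpow Q t *m y) j0 0 lb ub spi (lexx 0).
move=> /(_ (fun i => spi.1 i j0) hb 0); rewrite !mul0r addr0 subr0 => /andP[pi_lb pi_ub].
rewrite mulmxA pi_mxpow in pi_lb pi_ub.
have /andP[yt_lb yt_ub] := hb i.
have osc_eps : ub - lb <= eps.
  by apply: le_trans hw (le_trans _ hk); rewrite ler_wpM2l ?exprn_ge0 ?subr_ge0 //; lra.
by rewrite ler_norml; apply/andP; split; lra.
Qed.

Section Primitivity.
Variables (R : numDomainType) (n : nat) (Q : 'M[R]_n).
Hypothesis sQ : stochastic Q.

Lemma mxpow_ge0 k i j : 0 <= mxpow Q k i j.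
Proof. by have [] := stochastic_mxpow k sQ. Qed.

Lemma mxpowS_ge_term k i l j : Q i l * mxpow Q k l j <= mxpow Q k.+1 i j.
Proof.
rewrite mxpowS mxE (bigD1 l) //= lerDl.
by apply: sumr_ge0 => m _; rewrite mulr_ge0 ?mxpow_ge0 //; case: sQ.
Qed.

Lemma mxpow_path_gt0 (e : rel 'I_n) : (forall i j, e i j -> 0 < Q i j) ->
  forall p i, path e i p -> 0 < mxpow Q (size p) i (last i p).
Proof.
move=> Qe; elim=> [|l p IH] i /=; first by rewrite mxE eqxx ltr01.
case/andP=> eil pl; apply: lt_le_trans (mxpowS_ge_term _ _ l _).
by rewrite mulr_gt0 ?Qe ?IH.
Qed.

Lemma mxpow_gt0_addn : (forall i, 0 < Q i i) ->
  forall k l i j, 0 < mxpow Q k i j -> 0 < mxpow Q (l + k) i j.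
Proof.
move=> Qii k; elim=> [|l IH] i j // Qk; apply: lt_le_trans (mxpowS_ge_term _ _ i _).
by rewrite mulr_gt0 ?IH.
Qed.

(* Positive diagonal and connectivity make Q primitive: one power has all entries
   positive, hence bounded below by their product. *)
Lemma mxpow_uniform_lower_bound (e : rel 'I_n) :
  (forall i, 0 < Q i i) -> (forall i j, e i j -> 0 < Q i j) -> (forall i j, connect e i j) ->
  exists N d, 0 < d /\ forall i j, d <= mxpow Q N i j.
Proof.
move=> Qii Qe conn_e.
have /choice[len len_gt0] : forall ij : 'I_n * 'I_n, exists k, 0 < mxpow Q k ij.1 ij.2.
  move=> [i j] /=; case/connectP: (conn_e i j) => p ep ->.
  by exists (size p); apply: (mxpow_path_gt0 Qe).
pose N := (\sum_ij len ij)%N.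
have QN_gt0 i j : 0 < mxpow Q N i j.
  have len_le : (len (i, j) <= N)%N by rewrite /N (bigD1 (i, j)) //= leq_addr.
  by rewrite -(subnK len_le); apply/(mxpow_gt0_addn Qii)/(len_gt0 (i, j)).
exists N, (\prod_ij mxpow Q N ij.1 ij.2); split.
  by apply: prodr_gt0 => ij _; apply: QN_gt0.
move=> i j; rewrite (bigD1 (i, j)) //=; apply: ler_piMr; first exact/ltW/QN_gt0.
by apply: prodr_ile1 => ij _; rewrite mxpow_ge0 stochastic_le1 //; apply: stochastic_mxpow.
Qed.

End Primitivity.

Section Laplacian.
Variables (R : comNzRingType) (n : nat) (e : rel 'I_n).
Hypotheses (e_sym : symmetric e) (e_irr : irreflexive e).

Lemma laplacianE i j : laplacian R e i j = (i == j)%:R * (deg e i)%:R - (e i j)%:R.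
Proof.
rewrite mxE; case: eqVneq => [->|_]; first by rewrite e_irr mul1r subr0.
by rewrite mul0r sub0r; case: (e i j); rewrite ?oppr0.
Qed.

Lemma tr_laplacian : (laplacian R e)^T = laplacian R e.
Proof. by apply/matrixP => i j; rewrite !mxE eq_sym e_sym; case: eqVneq => [->|]. Qed.

Lemma laplacian_mul_const1 m : laplacian R e *m (const_mx 1 : 'M_(n, m)) = 0.
Proof.
apply/matrixP => i k; rewrite !mxE.
under eq_bigr => j _ do rewrite [X in _ * X]mxE mulr1 laplacianE.
rewrite sumrB (bigD1 i) //= eqxx mul1r big1 => [|j /negbTE]; last first.
  by rewrite eq_sym => ->; rewrite mul0r.
rewrite addr0 /deg -sum1_card natr_sum [X in X - _]big_mkcond /=.
by apply/eqP; rewrite subr_eq0; apply/eqP/eq_bigr => j _; rewrite inE; case: (e i j).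
Qed.

Lemma const1_mul_laplacian m : (const_mx 1 : 'M_(m, n)) *m laplacian R e = 0.
Proof.
apply: trmx_inj; rewrite trmx_mul tr_laplacian trmx_const laplacian_mul_const1.
by rewrite trmx0.
Qed.

End Laplacian.

Section BoundedIntegers.
Variable R : nzRingType.

Definition bounded_int (b : nat) (x : R) := exists z : int, (absz z <= 2 ^ b)%N /\ x = z%:~R.

Lemma bounded_int_intr b (z : int) : (absz z <= 2 ^ b)%N -> bounded_int b z%:~R.
Proof. by move=> hz; exists z. Qed.

Lemma bounded_int_le b b' x : (b <= b')%N -> bounded_int b x -> bounded_int b' x.
Proof. by move=> bb' [z [hz ->]]; exists z; split=> //; apply: leq_trans hz (leq_pexp2l _ bb'). Qed.

Lemma bounded_int0 b : bounded_int b 0.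
Proof. by exists 0; rewrite rmorph0. Qed.

Lemma bounded_intD b x y : bounded_int b x -> bounded_int b y -> bounded_int b.+1 (x + y).
Proof.
move=> [z [hz ->]] [w [hw ->]]; exists (z + w); rewrite rmorphD; split=> //.
rewrite expnS mul2n -addnn; apply: leq_trans (leq_add hz hw).
by rewrite -lez_nat PoszD !abszE ler_normD.
Qed.

Lemma bounded_intN b x : bounded_int b x -> bounded_int b (- x).
Proof. by move=> [z [hz ->]]; exists (- z); rewrite abszN rmorphN. Qed.

Lemma bounded_intM a b x y : bounded_int a x -> bounded_int b y -> bounded_int (a + b) (x * y).
Proof.
move=> [z [hz ->]] [w [hw ->]]; exists (z * w).
by rewrite rmorphM abszM expnD leq_mul.
Qed.

Lemma bounded_int_sum (I : finType) (F : I -> R) b k :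
  (forall i, bounded_int b (F i)) -> (#|I| <= 2 ^ k)%N -> bounded_int (b + k) (\sum_i F i).
Proof.
move=> /choice[z hz] hI; exists (\sum_i z i); split; last first.
  by rewrite rmorph_sum; apply: eq_bigr => i _; case: (hz i).
apply: (@leq_trans (\sum_i absz (z i))).
  rewrite -lez_nat abszE -natz natr_sum.
  by under eq_bigr => i _ do rewrite natz abszE; apply: ler_norm_sum.
apply: (@leq_trans (\sum_(i : I) 2 ^ b)); first by apply: leq_sum => i _; case: (hz i).
by rewrite sum_nat_const expnD mulnC leq_mul2l hI orbT.
Qed.

Lemma bounded_int_prod (I : finType) (P : pred I) (F : I -> R) b :
  (forall i, bounded_int b (F i)) -> bounded_int (b * #|P|) (\prod_(i | P i) F i).
Proof.
move=> /choice[z hz]; exists (\prod_(i | P i) z i); split; last first.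
  by rewrite rmorph_prod; apply: eq_bigr => i _; case: (hz i).
rewrite expnM -lez_nat abszE normr_prod -natz natrX -prodr_const.
by apply: ler_prod => i _; rewrite normr_ge0 -abszE natz lez_nat; case: (hz i).
Qed.

End BoundedIntegers.

Lemma fact_le_pow m : (m`! <= m ^ m)%N.
Proof.
elim: m => // m IH; rewrite factS expnS leq_mul //.
by apply: (leq_trans IH); case: m {IH} => // m; rewrite leq_exp2r.
Qed.

(* Leibniz expansion: [m!] signed products of [m] entries, and [m! <= m ^ m <= 2 ^ (k m)]. *)
Lemma bounded_int_det (R : comNzRingType) m (A : 'M[R]_m) b k :
  (forall i j, bounded_int b (A i j)) -> (m <= 2 ^ k)%N -> bounded_int ((b + k) * m) (\det A).
Proof.
move=> hA hm; rewrite mulnDl -[(b * m)%N]add0n.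
apply: bounded_int_sum => [s|].
  apply: bounded_intM; first by case: (odd_perm s); [exists (-1) | exists 1]; rewrite ?rmorphN.
  by rewrite -[m in (b * m)%N]card_ord; apply: bounded_int_prod.
rewrite card_Sn (leq_trans (fact_le_pow m)) // expnM.
by case: m {A hA} hm => // m hm; rewrite leq_exp2r.
Qed.

Lemma bounded_int_adj (R : comNzRingType) m (A : 'M[R]_m) b k :
  (forall i j, bounded_int b (A i j)) -> (m <= 2 ^ k)%N ->
  forall i j, bounded_int ((b + k) * m) (\adj A i j).
Proof.
move=> hA hm i j; rewrite mxE /cofactor -[(_ * m)%N]add0n.
apply: bounded_intM; first by rewrite -signr_odd; case: odd; [exists (-1) | exists 1]; rewrite ?rmorphN.
apply: bounded_int_le (leq_mul (leqnn _) (leq_pred m)) _.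
by apply: bounded_int_det (leq_trans (leq_pred m) hm) => k' l; rewrite !mxE.
Qed.

Lemma fits_le b b' z : (b <= b')%N -> fits b z -> fits b' z.
Proof. by move=> bb' hz; apply: leq_trans hz (leq_pexp2l _ bb'). Qed.

Lemma CD_rational_le (R : numFieldType) (I : finType) b b' (y : I -> R) :
  (b <= b')%N -> CD_rational b y -> CD_rational b' y.
Proof.
move=> bb' [q [q0 [hq hy]]]; exists q; split; [by [] | split; first exact: fits_le hq].
by move=> i; have [p [hp ->]] := hy i; exists p; split=> //; apply: fits_le hp.
Qed.

Lemma CD_rational_scaled (R : numFieldType) (I : finType) b (q : R) (y : I -> R) :
  q != 0 -> bounded_int b q -> (forall i, bounded_int b (q * y i)) -> CD_rational b.+1 y.
Proof.
move=> q0 [z [hz qz]] hy; have z0 : z != 0 by apply: contraNneq q0 => z0; rewrite qz z0.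
exists z; split=> //; split; first by rewrite /fits expnS; apply: leq_ltn_trans hz _; rewrite ltn_Pmull ?expn_gt0.
move=> i; have [w [hw yw]] := hy i; exists w; split.
  by rewrite /fits expnS; apply: leq_ltn_trans hw _; rewrite ltn_Pmull ?expn_gt0.
by rewrite -yw -qz [q * _]mulrC mulfK.
Qed.

Lemma bounded_int_numq (R : nzRingType) p (r : rat) :
  rat_bits p r -> bounded_int p ((numq r)%:~R : R).
Proof. by case/andP => /ltnW hr _; apply: bounded_int_intr. Qed.

Lemma bounded_int_denq (R : nzRingType) p (r : rat) :
  rat_bits p r -> bounded_int p ((denq r)%:~R : R).
Proof. by case/andP => _ /ltnW hr; apply: bounded_int_intr. Qed.

Lemma bounded_int_prod_denq (R : nzRingType) (I : finType) (r : I -> rat) p :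
  (forall i, rat_bits p (r i)) -> bounded_int (p * #|I|) (\prod_i ((denq (r i))%:~R : R)).
Proof. by move=> hr; apply: bounded_int_prod => i; apply: bounded_int_denq. Qed.

Lemma bounded_int_prod_denq_mul (R : numFieldType) (I : finType) (r : I -> rat) p i :
  (forall i, rat_bits p (r i)) ->
  bounded_int (p + p * #|I|) (\prod_j ((denq (r j))%:~R : R) * ratr (r i)).
Proof.
move=> hr; rewrite (bigD1 i) //= mulrAC /ratr mulrCA mulfV ?mulr1 ?intr_eq0 ?denq_neq0 //.
apply: bounded_intM; first exact: bounded_int_numq.
apply: bounded_int_le (bounded_int_prod _ (fun j => bounded_int_denq R (hr j))).
by rewrite leq_mul2l max_card orbT.
Qed.

Definition bordered (R : nzRingType) n (M : 'M[R]_n) (v : 'rV[R]_n) : 'M[R]_(n + 1) :=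
  block_mx M v^T v 0.

Lemma bordered_mul_adj (R : comNzRingType) n (M : 'M[R]_n) (v : 'rV[R]_n) :
  let A := \adj (bordered M v) in
  M *m ulsubmx A + v^T *m dlsubmx A = (\det (bordered M v))%:M /\ v *m ulsubmx A = 0.
Proof.
move=> A; have := mul_mx_adj (bordered M v).
rewrite -/A -[A]submxK /bordered mulmx_block (scalar_mx_block n 1).
case/eq_block_mx => MA _ vA _; rewrite block_mxKul block_mxKdl; split=> //.
by rewrite mul0mx addr0 in vA.
Qed.

(* Writing [c i = numq / denq], this bordered matrix has integer entries; its adjugate
   supplies integer numerators of Gamma and pi over the common denominator [\det]. *)
Definition flock_border (R : comNzRingType) n (e : rel 'I_n) (c : 'I_n -> rat) :=
  let N := diag_mx (\row_i ((numq (c i))%:~R : R)) in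
  bordered (N *m laplacian R e *m N) (\row_i (denq (c i))%:~R).

Lemma xr_entry (R : realType) n d (c : 'I_n -> rat) (G : 'M[R]_n) (X0 V1 : 'M[rat]_(n, d)) i k :
  xr c G X0 V1 i k = \sum_j ((i == j)%:R - pivec R c j 0) * ratr (X0 j k) +
                     \sum_j G i j * ratr (V1 j k).
Proof.
rewrite /xr [LHS]mxE; congr (_ + _); rewrite mxE; apply: eq_bigr => j _; rewrite !mxE //.
by rewrite big_ord1 !mxE mul1r.
Qed.

Section FlockingMatrix.
Variables (R : realType) (n : nat) (e : rel 'I_n) (c : 'I_n -> rat).
Hypotheses (e_sym : symmetric e) (e_irr : irreflexive e).
Hypotheses (c_gt0 : forall i, 0 < c i) (c_deg_lt1 : forall i, c i * (deg e i)%:R < 1).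

Local Notation L := (laplacian R e).
Local Notation C := (Cmat R c).
Local Notation P := (Pmat R e c).
Local Notation pi := (pivec R c).
Local Notation Cinv := (diag_mx (\row_i (ratr (c i) : R)^-1)).

Lemma ratr_c_gt0 i : 0 < (ratr (c i) : R).
Proof. by rewrite ltr0q. Qed.

Lemma ratr_c_deg_lt1 i : (ratr (c i) : R) * (deg e i)%:R < 1.
Proof. by rewrite -(rmorph_nat (@ratr R)) -rmorphM /= -(rmorph1 (@ratr R)) ltr_rat. Qed.

Lemma Cinv_mul_Cmat : Cinv *m C = 1%:M.
Proof.
apply/matrixP => i j; rewrite /Cmat mul_diag_mx !mxE.
by case: eqVneq => [->|]; rewrite ?mulr1n ?mulr0n ?mulr0 // mulVf // gt_eqF ?ratr_c_gt0.
Qed.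

Lemma invmx_Cmat : invmx C = Cinv.
Proof.
have [_ C_unit] := mulmx1_unit Cinv_mul_Cmat.
by rewrite -[invmx C]mul1mx -Cinv_mul_Cmat -mulmxA mulmxV ?mulmx1.
Qed.

Lemma trace_Cinv : \tr Cinv = \sum_i (ratr (c i))^-1.
Proof. by rewrite mxtrace_diag; apply: eq_bigr => i _; rewrite mxE. Qed.

Lemma tr_Cinv_gt0 : (0 < n)%N -> 0 < \tr Cinv.
Proof.
move=> n_gt0; rewrite trace_Cinv (bigD1 (Ordinal n_gt0)) //=.
by rewrite ltr_pwDl ?invr_gt0 ?ratr_c_gt0 // sumr_ge0 // => i _; rewrite invr_ge0 ltW ?ratr_c_gt0.
Qed.

Lemma const1_Cinv_const1 : const_mx 1 *m Cinv *m const_mx 1 = (\tr Cinv)%:M :> 'M_1.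
Proof.
apply/matrixP => i j; rewrite !ord1 mxtrace_diag mul_mx_diag !mxE mulr1n.
by apply: eq_bigr => k _; rewrite !mxE mul1r mulr1.
Qed.

Lemma tr_pivec : pi^T = (\tr Cinv)^-1 *: (const_mx 1 *m Cinv).
Proof.
by rewrite /pivec invmx_Cmat linearZ /= trmx_mul trmx_const tr_diag_mx.
Qed.

Lemma Pmat_entry i j : P i j = (i == j)%:R - ratr (c i) * L i j.
Proof. by rewrite /Pmat /Cmat mxE mul_diag_mx !mxE. Qed.

Lemma Pmat_diag i : P i i = 1 - ratr (c i) * (deg e i)%:R.
Proof. by rewrite Pmat_entry laplacianE // eqxx e_irr mul1r subr0. Qed.

Lemma Pmat_offdiag i j : i != j -> P i j = ratr (c i) * (e i j)%:R.
Proof. by move=> /negbTE ij; rewrite Pmat_entry laplacianE // ij mul0r !sub0r mulrN opprK. Qed.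

Lemma Pmat_mul_const1 m : P *m (const_mx 1 : 'M_(n, m)) = const_mx 1.
Proof. by rewrite /Pmat mulmxBl mul1mx -mulmxA laplacian_mul_const1 // mulmx0 subr0. Qed.

Lemma Pmat_stochastic : stochastic P.
Proof.
split=> [i j|i].
  case: (eqVneq i j) => [<-|ij]; first by rewrite Pmat_diag subr_ge0 ltW ?ratr_c_deg_lt1.
  by rewrite Pmat_offdiag // mulr_ge0 ?ler0n ?ltW ?ratr_c_gt0.
have := congr1 (fun M : 'cV_n => M i 0) (Pmat_mul_const1 1); rewrite !mxE => <-.
by apply: eq_bigr => j _; rewrite [X in _ = _ * X]mxE mulr1.
Qed.

Lemma pivec_stochastic : (0 < n)%N -> stochastic pi^T.
Proof.
move=> n_gt0; have s_gt0 := tr_Cinv_gt0 n_gt0.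
rewrite tr_pivec mul_mx_diag; split=> [i j|i]; rewrite ?mxE.
  by apply: mulr_ge0; [rewrite invr_ge0 ltW | rewrite divr_ge0 // ltW // ratr_c_gt0].
under eq_bigr => j _ do rewrite !mxE mul1r.
by rewrite -mulr_sumr -trace_Cinv mulVf ?gt_eqF.
Qed.

Lemma pivecT_mul_Pmat : pi^T *m P = pi^T.
Proof.
rewrite /Pmat mulmxBr mulmx1 tr_pivec -!scalemxAl -!mulmxA (mulmxA Cinv).
by rewrite Cinv_mul_Cmat mul1mx const1_mul_laplacian // scaler0 subr0.
Qed.

Lemma Pmat_diag_gt0 i : 0 < P i i.
Proof. by rewrite Pmat_diag subr_gt0 ratr_c_deg_lt1. Qed.

Lemma Pmat_edge_gt0 i j : e i j -> 0 < P i j.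
Proof.
move=> eij; have ij : i != j by apply: contraTneq eij => ->; rewrite e_irr.
by rewrite Pmat_offdiag // eij mulr1 ratr_c_gt0.
Qed.

Hypothesis e_conn : forall i j, connect e i j.

Lemma Pmat_mxpow_cvg (y : 'cV[R]_n) i :
  (fun t => (mxpow P t *m y) i 0) @ \oo --> (pi^T *m y) 0 0.
Proof.
have sP := Pmat_stochastic.
have [N [d [d_gt0 hd]]] := mxpow_uniform_lower_bound sP Pmat_diag_gt0 Pmat_edge_gt0 e_conn.
have n_gt0 : (0 < n)%N by apply: leq_ltn_trans (ltn_ord i).
exact: (stochastic_mxpow_cvg sP (pivec_stochastic n_gt0) pivecT_mul_Pmat d_gt0 (hd^~ i)).
Qed.

Lemma laplacian_kernel (y : 'rV[R]_n) : y *m L = 0 -> y = const_mx ((y *m pi) 0 0).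
Proof.
move=> yL; apply/matrixP => a k; rewrite ord1 [RHS]mxE.
have fixed t : mxpow P t *m y^T = y^T.
  elim: t => [|t IH]; first by rewrite mul1mx.
  rewrite mxpowS -mulmxA IH /Pmat mulmxBl mul1mx -mulmxA -tr_laplacian //.
  by rewrite -trmx_mul yL trmx0 mulmx0 subr0.
have := @Pmat_mxpow_cvg y^T k; under eq_fun => t do rewrite fixed.
move/(cvg_unique (@Rhausdorff R) (cvg_cst _)); rewrite mxE => ->.
by rewrite -trmx_mul mxE.
Qed.

Local Notation Cnum := (diag_mx (\row_i ((numq (c i))%:~R : R))).
Local Notation cden := (\row_i ((denq (c i))%:~R : R)).
Local Notation Cden := (diag_mx cden).
Local Notation B := (flock_border R e c).

Lemma Cden_mul_Cmat : Cden *m C = Cnum.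
Proof.
apply/matrixP => i j; rewrite /Cmat mul_diag_mx !mxE /ratr.
by case: eqVneq => [->|]; rewrite ?mulr1n ?mulr0n ?mulr0 // mulrC divfK // intr_eq0 denq_neq0.
Qed.

Lemma Cinv_mul_Cnum : Cinv *m Cnum = Cden.
Proof. by rewrite -Cden_mul_Cmat mulmxA diag_mxC -mulmxA Cinv_mul_Cmat mulmx1. Qed.

Lemma Cnum_unit : Cnum \in unitmx.
Proof.
rewrite unitmxE det_diag unitfE; apply/prodf_neq0 => i _.
by rewrite mxE intr_eq0 numq_eq0 gt_eqF.
Qed.

Lemma Cden_unit : Cden \in unitmx.
Proof.
rewrite unitmxE det_diag unitfE; apply/prodf_neq0 => i _.
by rewrite mxE intr_eq0 denq_neq0.
Qed.

Lemma Cden_mul_const1 : Cden *m const_mx 1 = cden^T.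
Proof. by apply/matrixP => i j; rewrite mul_diag_mx !mxE mulr1. Qed.

Lemma const1_mul_Cden : const_mx 1 *m Cden = cden.
Proof. by apply/matrixP => i j; rewrite mul_mx_diag !mxE mul1r. Qed.

(* The kernel of the bordered matrix is trivial: a left null vector (x, mu) gives
   [(x Cnum) L = - mu 1 Cinv], whence mu = 0, then x Cnum is constant, and the border
   row forces that constant to vanish. *)
Lemma flock_border_det_neq0 : (0 < n)%N -> \det B != 0.
Proof.
move=> n_gt0; have s_neq0 := gt_eqF (tr_Cinv_gt0 n_gt0).
apply/negP => /det0P[x x_neq0]; rewrite -[x]hsubmxK /flock_border /bordered mul_row_block.
rewrite mulmx0 addr0 -row_mx0 => /eq_row_mx[xM xv].
set y := lsubmx x *m Cnum; set mu := rsubmx x 0 0.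
have vrE : cden = const_mx 1 *m Cinv *m Cnum by rewrite -mulmxA Cinv_mul_Cnum const1_mul_Cden.
have yL : y *m L = - mu *: (const_mx 1 *m Cinv).
  apply: (can_inj (mulmxK Cnum_unit)); apply/eqP.
  rewrite -scalemxAl -vrE scaleNr -addr_eq0 /y.
  by rewrite [rsubmx x]mx11_scalar mul_scalar_mx !mulmxA in xM; rewrite xM.
have mu0 : mu = 0.
  have := congr1 (mulmx^~ (const_mx 1 : 'cV_n)) yL.
  rewrite -mulmxA laplacian_mul_const1 // mulmx0 -scalemxAl const1_Cinv_const1.
  move/(congr1 (fun M : 'M_1 => M 0 0)); rewrite !mxE eqxx mulr1n => /esym/eqP.
  by rewrite mulf_eq0 oppr_eq0 s_neq0 orbF => /eqP.
have yc : y = (y *m pi) 0 0 *: const_mx 1.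
  by rewrite scalemx_const mulr1; apply: laplacian_kernel; rewrite yL mu0 oppr0 scale0r.
set l := (y *m pi) 0 0 in yc.
have l0 : l = 0.
  have := congr1 (fun M : 'M_1 => M 0 0) xv.
  rewrite -Cden_mul_const1 -Cinv_mul_Cnum diag_mxC !mulmxA -/y yc -!scalemxAl.
  rewrite const1_Cinv_const1 !mxE eqxx mulr1n => /eqP.
  by rewrite mulf_eq0 s_neq0 orbF => /eqP.
move/negP: x_neq0; apply; apply/eqP.
rewrite -[x]hsubmxK -[lsubmx x](mulmxK Cnum_unit) -/y yc l0 scale0r mul0mx.
by rewrite [rsubmx x]mx11_scalar -/mu mu0 raddf0 row_mx0.
Qed.

Definition flock_Gamma : 'M[R]_n := (\det B)^-1 *: (Cnum *m ulsubmx (\adj B) *m Cden).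

Hypothesis n_gt0 : (0 < n)%N.

Lemma Cmat_laplacian_Gamma_border :
  C *m L *m flock_Gamma = 1%:M - const_mx 1 *m ((\det B)^-1 *: (dlsubmx (\adj B) *m Cden)).
Proof.
have det_neq0 := flock_border_det_neq0 n_gt0.
have [MA _] := bordered_mul_adj (Cnum *m L *m Cnum) cden.
have MA' : Cnum *m L *m Cnum *m ulsubmx (\adj B) = (\det B)%:M - cden^T *m dlsubmx (\adj B).
  by rewrite -MA addrK.
apply: (can_inj (mulKmx Cden_unit)).
rewrite !mulmxA Cden_mul_Cmat /flock_Gamma -!scalemxAr !mulmxA MA'.
rewrite mulmxBl mul_scalar_mx scalerBr scalerA mulVf // scale1r mulmxBr mulmx1.
by rewrite -scalemxAr !mulmxA Cden_mul_const1.
Qed.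

(* Left-multiplying by [1 Cinv] kills [C L] and identifies the border row with pi. *)
Lemma tr_pivec_flock_border : pi^T = (\det B)^-1 *: (dlsubmx (\adj B) *m Cden).
Proof.
have := congr1 (@mulmx _ 1 n n (const_mx 1 *m Cinv)) Cmat_laplacian_Gamma_border.
rewrite !mulmxA -(mulmxA _ Cinv) Cinv_mul_Cmat mulmx1 const1_mul_laplacian // mul0mx.
rewrite mulmxBr mulmx1 mulmxA const1_Cinv_const1 mul_scalar_mx => /eqP.
rewrite eq_sym subr_eq0 => /eqP border_row.
by rewrite tr_pivec border_row scalerA mulVf ?scale1r // gt_eqF ?tr_Cinv_gt0.
Qed.

Lemma Cmat_laplacian_Gamma : C *m L *m flock_Gamma = 1%:M - onepiT R c.
Proof. by rewrite Cmat_laplacian_Gamma_border -tr_pivec_flock_border. Qed.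

Lemma pivecT_mul_Gamma : pi^T *m flock_Gamma = 0.
Proof.
have [_ vA] := bordered_mul_adj (Cnum *m L *m Cnum) cden.
rewrite tr_pivec /flock_Gamma -scalemxAl -scalemxAr !mulmxA -(mulmxA _ Cinv) Cinv_mul_Cnum.
by rewrite const1_mul_Cden vA !mul0mx !scaler0.
Qed.

Lemma Gamma_partialE t : Gamma_partial R e c t = flock_Gamma - mxpow P t *m flock_Gamma.
Proof.
elim: t => [|t IH]; first by rewrite /Gamma_partial big_ord0 scale0r oppr0 add0r mul1mx subrr.
have -> : Gamma_partial R e c t.+1 = Gamma_partial R e c t + mxpow P t - onepiT R c.
  rewrite /Gamma_partial big_ord_recr /= -addn1 natrD scalerDl scale1r opprD.
  by rewrite -!addrA; congr (_ + _); rewrite addrC -addrA.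
have P_onepiT : mxpow P t *m onepiT R c = onepiT R c.
  by rewrite /onepiT mulmxA stochastic_mul_const //; apply/stochastic_mxpow/Pmat_stochastic.
have PG : P *m flock_Gamma = flock_Gamma - (1%:M - onepiT R c).
  by rewrite -Cmat_laplacian_Gamma /Pmat mulmxBl mul1mx.
rewrite IH mxpowSr -mulmxA PG !mulmxBr mulmx1 P_onepiT opprB !addrA.
by rewrite [RHS]addrAC [in RHS](addrAC flock_Gamma).
Qed.

Lemma Gamma_partial_cvg i j :
  (fun t : nat => Gamma_partial R e c t i j) @ \oo --> flock_Gamma i j.
Proof.
have col_entry (M : 'M_n) : (M *m col j flock_Gamma) i 0 = (M *m flock_Gamma) i j.
  by rewrite colE mulmxA -colE mxE.
have lim0 : (pi^T *m col j flock_Gamma) 0 0 = 0.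
  by rewrite colE mulmxA -colE pivecT_mul_Gamma !mxE.
have -> : (fun t => Gamma_partial R e c t i j) =
    (fun t => flock_Gamma i j - (mxpow P t *m col j flock_Gamma) i 0).
  by apply/funext => t; rewrite Gamma_partialE col_entry !mxE.
have := cvgB (cvg_cst (flock_Gamma i j)) (@Pmat_mxpow_cvg (col j flock_Gamma) i).
by rewrite lim0 subr0; apply.
Qed.

Section BitSize.
Variables (b T : nat).
Hypotheses (c_bits : forall i, rat_bits b (c i)) (n_lt : (n.+1 <= 2 ^ T)%N).

Lemma bounded_int_laplacian i j : bounded_int T (L i j).
Proof.
have deg_le : (deg e i <= 2 ^ T)%N.
  by apply: leq_trans (ltnW n_lt); apply: leq_trans (max_card _) _; rewrite card_ord.
rewrite mxE; case: (i == j); first by rewrite pmulrn; apply: bounded_int_intr.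
by case: (e i j); [apply: bounded_intN; exists 1; split; [exact: expn_gt0 | rewrite rmorph1] | apply: bounded_int0].
Qed.

Lemma bounded_int_flock_border i j : bounded_int (b + T + b) (B i j).
Proof.
have hu k := bounded_int_numq R (c_bits k); have hv k := bounded_int_denq R (c_bits k).
rewrite -[i]splitK -[j]splitK; case: (fintype.split i) => i'; case: (fintype.split j) => j';
  rewrite /flock_border /bordered /unsplit ?block_mxEul ?block_mxEur ?block_mxEdl ?block_mxEdr.
- have hL := bounded_int_laplacian i' j'; rewrite mxE in hL.
  rewrite mul_mx_diag mul_diag_mx !mxE.
  by apply: bounded_intM; [apply: bounded_intM | apply: hu].
- by rewrite !mxE; apply: bounded_int_le (hv _); rewrite -addnA leq_addr.
- by rewrite !mxE; apply: bounded_int_le (hv _); rewrite -addnA leq_addr.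
- by rewrite mxE; apply: bounded_int0.
Qed.

Local Notation Z := ((b + T + b + T) * (n + 1))%N.

Lemma bounded_int_det_flock_border : bounded_int Z (\det B).
Proof. by apply: bounded_int_det bounded_int_flock_border _; rewrite addn1. Qed.

Lemma bounded_int_adj_flock_border i j : bounded_int Z (\adj B i j).
Proof. by apply: bounded_int_adj bounded_int_flock_border _ i j; rewrite addn1. Qed.

Lemma det_mul_flock_Gamma k j :
  \det B * flock_Gamma k j = (numq (c k))%:~R * ulsubmx (\adj B) k j * (denq (c j))%:~R.
Proof.
rewrite /flock_Gamma mxE mulrA mulfV ?flock_border_det_neq0 // mul1r.
by rewrite mul_mx_diag mul_diag_mx !mxE.
Qed.

Lemma det_mul_pivec j : \det B * pi j 0 = dlsubmx (\adj B) 0 j * (denq (c j))%:~R.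
Proof.
have := congr1 (fun M : 'rV_n => M 0 j) tr_pivec_flock_border; rewrite /= [in X in X -> _]mxE => ->.
by rewrite mxE mulrA mulfV ?flock_border_det_neq0 // mul1r mul_mx_diag mxE [X in _ * X]mxE.
Qed.

Lemma bounded_int_det_mul_flock_Gamma i j :
  bounded_int (b + Z + b) (\det B * flock_Gamma i j).
Proof.
rewrite det_mul_flock_Gamma [ulsubmx _ _ _]mxE [usubmx _ _ _]mxE.
apply: bounded_intM; last exact: bounded_int_denq.
by apply: bounded_intM; [apply: bounded_int_numq | apply: bounded_int_adj_flock_border].
Qed.

Lemma bounded_int_det_mul_pivec j : bounded_int (b + Z + b) (\det B * pi j 0).
Proof.
rewrite det_mul_pivec [dlsubmx _ _ _]mxE [dsubmx _ _ _]mxE.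
apply: bounded_int_le (_ : Z + b <= b + Z + b)%N _; first by rewrite addnC leq_addr.
by apply: bounded_intM; [apply: bounded_int_adj_flock_border | apply: bounded_int_denq].
Qed.

Lemma flock_Gamma_CD_rational :
  CD_rational (b + Z + b).+1 (fun ij : 'I_n * 'I_n => flock_Gamma ij.1 ij.2).
Proof.
apply: (CD_rational_scaled (flock_border_det_neq0 n_gt0)) => [|[i j]].
  by apply: bounded_int_le bounded_int_det_flock_border; lia.
exact: bounded_int_det_mul_flock_Gamma.
Qed.

Lemma xr_CD_rational d (X0 V1 : 'M[rat]_(n, d)) p :
  (forall j k, rat_bits p (X0 j k) /\ rat_bits p (V1 j k)) ->
  let E := ((b + Z + b).+1 + (p + p * (n * d)) + p * (n * d))%N in
  CD_rational (E + T).+2 (fun ik : 'I_n * 'I_d => xr c flock_Gamma X0 V1 ik.1 ik.2).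
Proof.
move=> hX E.
have hX0 (jk : 'I_n * 'I_d) := (hX jk.1 jk.2).1; have hV1 (jk : 'I_n * 'I_d) := (hX jk.1 jk.2).2.
have card_nd : #|{: 'I_n * 'I_d}| = (n * d)%N by rewrite card_prod !card_ord.
pose DX := \prod_(jk : 'I_n * 'I_d) ((denq (X0 jk.1 jk.2))%:~R : R).
pose DV := \prod_(jk : 'I_n * 'I_d) ((denq (V1 jk.1 jk.2))%:~R : R).
have bDX := bounded_int_prod_denq R hX0; have bDV := bounded_int_prod_denq R hV1.
have bdet := bounded_int_det_flock_border.
apply: (@CD_rational_scaled _ _ _ (\det B * (DX * DV))) => [|| [i k] /=].
- by rewrite !mulf_neq0 ?flock_border_det_neq0 //; apply/prodf_neq0 => jk _;
    rewrite intr_eq0 denq_neq0.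
- apply: bounded_int_le (bounded_intM bdet (bounded_intM bDX bDV)).
  by rewrite /E card_nd; lia.
have -> : \det B * (DX * DV) * xr c flock_Gamma X0 V1 i k =
    \sum_j (((i == j)%:R * \det B - \det B * pi j 0) * (DX * ratr (X0 j k)) * DV) +
    \sum_j (\det B * flock_Gamma i j * (DV * ratr (V1 j k)) * DX).
  by rewrite xr_entry mulrDr !mulr_sumr; congr (_ + _); apply: eq_bigr => j _; ring.
have bdelta j : bounded_int (b + Z + b) ((i == j)%:R * \det B).
  apply: bounded_int_le (_ : 0 + Z <= b + Z + b)%N _; first by lia.
  by apply: bounded_intM bdet; case: (i == j); [exists 1 | exists 0]; rewrite ?rmorph1 ?rmorph0.
rewrite /E -card_nd; apply: bounded_intD; apply: bounded_int_sum; rewrite ?card_ord ?(ltnW n_lt) //.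
- move=> j; apply: (bounded_intM _ bDV); apply: (bounded_intM _ (bounded_int_prod_denq_mul R (j, k) hX0)).
  by apply: bounded_intD; [apply: bdelta | apply/bounded_intN/bounded_int_det_mul_pivec].
- move=> j; apply: bounded_int_le (_ : _ <= (b + Z + b).+1 + _ + _)%N
    (bounded_intM (bounded_intM (bounded_int_det_mul_flock_Gamma i j) (bounded_int_prod_denq_mul R (j, k) hV1)) bDX).
  by rewrite !leq_add2r.
Qed.

End BitSize.

End FlockingMatrix.

Theorem lemma3p12 (a d : nat) :
  exists K : nat,
  forall (R : realType) (n : nat) (e : rel 'I_n) (c : 'I_n -> rat)
         (X0 V1 : 'M[rat]_(n, d)) (p : nat),
    (0 < n)%N ->
    symmetric e -> irreflexive e -> (forall i j, connect e i j) ->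
    (forall i, 0 < c i /\ rat_bits (a * (up_log 2 n).+1) (c i)) ->
    (forall i, c i * (deg e i)%:R < 1) ->
    (forall i k, rat_bits p (X0 i k) /\ rat_bits p (V1 i k)) ->
    exists Gamma : 'M[R]_n,
      (forall i j, (fun t : nat => Gamma_partial R e c t i j) @ \oo --> Gamma i j) /\
      CD_rational (K * (n * (up_log 2 n).+1))
        (fun ij : 'I_n * 'I_n => Gamma ij.1 ij.2) /\
      CD_rational (K * (n * (up_log 2 n).+1 + p * n))
        (fun ik : 'I_n * 'I_d => xr c Gamma X0 V1 ik.1 ik.2).
Proof.
exists (6 * a + 2 * d + 8)%N.
move=> R n e c X0 V1 p n_gt0 e_sym e_irr e_conn hc c_deg hX.
set T := (up_log 2 n).+1.
have n_lt : (n.+1 <= 2 ^ T)%N by rewrite expnS; have := @up_logP 2 n isT; lia.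
have c_gt0 i : 0 < c i := (hc i).1.
have c_bits i : rat_bits (a * T) (c i) := (hc i).2.
exists (flock_Gamma R e c); split; first exact: Gamma_partial_cvg.
split.
  apply: CD_rational_le (flock_Gamma_CD_rational R e_sym e_irr c_gt0 c_deg e_conn n_gt0 c_bits n_lt).
  nia.
apply: CD_rational_le (xr_CD_rational R e_sym e_irr c_gt0 c_deg e_conn n_gt0 c_bits n_lt hX).
nia.
Qed.
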